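(* Suppose $(A,B,K,\tilde\Theta)$ with $\tilde\Theta\in\mathbb{S}_+^{n_x}$ satisfies $$(A+BK)^\top\tilde\Theta(A+BK)-\tilde\Theta+\tilde Q+K^\top\tilde RK\prec0. \quad (\mathrm{D})$$ Consider the LMI in the variables $(\mathbf A,\mathbf B,\mathbf K,\tilde{\mathbf\Theta})$: $$\begin{bmatrix} \mathbf I & \mathbf 0 & \mathbf 0 & -\mathbf B^\top & \mathbf K\\ * & \tilde Q^{-1} & \mathbf 0 & \mathbf 0 & \mathbf I\\ * & * & \tilde R^{-1} & \mathbf 0 & \mathbf K\\ * & * & * & \mathcal{L}^{\mathbf I,\tilde\Theta}_{\mathbf I,\tilde{\mathbf\Theta}}+\mathcal{L}^{B^\top,\mathbf I}_{\mathbf B^\top,\mathbf I} & \mathbf A\\ * & * & * & * & \tilde{\mathbf\Theta}+\mathcal{L}^{K,\mathbf I}_{\mathbf K,\mathbf I} \end{bmatrix}\succ0.$$ Then (a) it is satisfied by $(A,B,K,\tilde\Theta)$; and (b) every solution with $\tilde{\mathbf\Theta}\in\mathbb{S}_+^{n_x}$ satisfies (D) with $(A,B,K,\tilde\Theta)$ replaced by $(\mathbf A,\mathbf B,\mathbf K,\tilde{\mathbf\Theta})$.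
   Context: $A\in\mathbb{R}^{n_x\times n_x}$, $B\in\mathbb{R}^{n_x\times n_u}$, $K\in\mathbb{R}^{n_u\times n_x}$ (bold versions same sizes); $\tilde Q\in\mathbb{S}_+^{n_x}$, $\tilde R\in\mathbb{S}_+^{n_u}$ are fixed. $\mathbb{S}_+^m$ is the set of $m\times m$ symmetric positive definite matrices; $\succ0$ ($\prec0$) means symmetric positive (negative) definite; $*$ denotes symmetric blocks; the first diagonal $\mathbf I$ is $n_u\times n_u$ and the $\mathbf I$ in row 2 is $n_x\times n_x$. For $\mathbf L,L\in\mathbb{R}^{m\times n}$ and symmetric invertible $\mathbf D,D\in\mathbb{R}^{m\times m}$, $\mathcal{L}^{L,D}_{\mathbf L,\mathbf D}:=\mathbf L^\top D^{-1}L+L^\top D^{-1}\mathbf L-L^\top D^{-1}\mathbf DD^{-1}L$. *)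

From HB Require Import structures.
From mathcomp Require Import all_boot all_order all_algebra.
From mathcomp Require Import reals.
Set Implicit Arguments. Unset Strict Implicit. Unset Printing Implicit Defensive.
Import Order.TTheory GRing.Theory Num.Theory.
Local Open Scope ring_scope.

Definition posdef (R : realType) (n : nat) (M : 'M[R]_n) : Prop :=
  M^T = M /\ forall x : 'cV[R]_n, x != 0 -> 0 < (x^T *m M *m x) 0 0.

Definition negdef (R : realType) (n : nat) (M : 'M[R]_n) : Prop :=
  M^T = M /\ forall x : 'cV[R]_n, x != 0 -> (x^T *m M *m x) 0 0 < 0.

(* Lcal L D Lb Db  =  \mathcal{L}^{L,D}_{Lb,Db}
   := Lb^T D^{-1} L + L^T D^{-1} Lb - L^T D^{-1} Db D^{-1} L *)
Definition Lcal (R : realType) (m n : nat) (L : 'M[R]_(m, n)) (D : 'M[R]_m)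
    (Lb : 'M[R]_(m, n)) (Db : 'M[R]_m) : 'M[R]_n :=
  Lb^T *m invmx D *m L + L^T *m invmx D *m Lb
  - L^T *m invmx D *m Db *m invmx D *m L.

Definition symblock2 (R : realType) (p q : nat) (P : 'M[R]_p) (C : 'M[R]_(p, q))
  (S : 'M[R]_q) : 'M[R]_(p + q) := block_mx P C C^T S.

(* Nominal data (A,B,K,Th) are the linearization points, bold variables
   (Ab,Bb,Kb,Thb) are the LMI unknowns; Qt, Rt are the fixed weights. *)
Definition LMI (R : realType) (nx nu : nat)
    (Qt : 'M[R]_nx) (Rt : 'M[R]_nu)
    (A : 'M[R]_nx) (B : 'M[R]_(nx, nu)) (K : 'M[R]_(nu, nx)) (Th : 'M[R]_nx)
    (Ab : 'M[R]_nx) (Bb : 'M[R]_(nx, nu)) (Kb : 'M[R]_(nu, nx)) (Thb : 'M[R]_nx)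
    : 'M[R]_(nu + nx + nu + nx + nx) :=
  let D11 : 'M[R]_nu := 1%:M in
  let D22 : 'M[R]_nx := invmx Qt in
  let D33 : 'M[R]_nu := invmx Rt in
  let D44 : 'M[R]_nx :=
    Lcal (1%:M : 'M[R]_nx) Th (1%:M : 'M[R]_nx) Thb
    + Lcal B^T (1%:M : 'M[R]_nu) Bb^T (1%:M : 'M[R]_nu) in
  let D55 : 'M[R]_nx := Thb + Lcal K (1%:M : 'M[R]_nu) Kb (1%:M : 'M[R]_nu) in
  let C2 : 'M[R]_(nu, nx) := 0 in
  let C3 : 'M[R]_(nu + nx, nu) := col_mx (0 : 'M[R]_(nu, nu)) (0 : 'M[R]_(nx, nu)) in
  let C4 : 'M[R]_(nu + nx + nu, nx) :=
    col_mx (col_mx (- Bb^T) (0 : 'M[R]_(nx, nx))) (0 : 'M[R]_(nu, nx)) in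
  let C5 : 'M[R]_(nu + nx + nu + nx, nx) :=
    col_mx (col_mx (col_mx Kb (1%:M : 'M[R]_nx)) Kb) Ab in
  symblock2 (symblock2 (symblock2 (symblock2 D11 C2 D22) C3 D33) C4 D44) C5 D55.

Definition Dmat (R : realType) (nx nu : nat) (Qt : 'M[R]_nx) (Rt : 'M[R]_nu)
    (A : 'M[R]_nx) (B : 'M[R]_(nx, nu)) (K : 'M[R]_(nu, nx)) (Th : 'M[R]_nx)
    : 'M[R]_nx :=
  (A + B *m K)^T *m Th *m (A + B *m K) - Th + Qt + K^T *m Rt *m K.

From HB Require Import structures.
From mathcomp Require Import all_boot all_order all_algebra.
From mathcomp Require Import reals.
From mathcomp Require Import ring lra.
Set Implicit Arguments. Unset Strict Implicit. Unset Printing Implicit Defensive.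
Import Order.TTheory GRing.Theory Num.Theory.
Local Open Scope ring_scope.

(* The LMI is a Schur-complement form of (D) in which each inverse term
   X^T P^{-1} X has been replaced by its tangent Lcal at the nominal point;
   since P |-> X^T P^{-1} X is convex, the tangent is a lower bound.
   (a) At the nominal point the quadratic form of the LMI matrix is a sum of
   squares weighted by Qt^-1, Rt^-1, Th^-1, plus -x^T D x, hence positive.
   (b) Testing the LMI matrix against the vector
   (Bb^T y - Kb x, -Qt x, -Rt Kb x, y, x) with y = -Thb (Ab + Bb Kb) x
   gives -x^T D x minus three squares (the linearization errors in K, B and
   Th); positivity of the LMI therefore forces x^T D x < 0. *)

Section Definiteness.
Variable R : realType.

Lemma posdef_quad_ge0 n (P : 'M[R]_n) (z : 'cV[R]_n) :
  posdef P -> 0 <= (z^T *m P *m z) 0 0.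
Proof.
case=> _ HP; have [->|nz] := eqVneq z 0; first by rewrite mulmx0 mxE.
exact/ltW/HP.
Qed.

Lemma posdef_quad_eq0 n (P : 'M[R]_n) (z : 'cV[R]_n) :
  posdef P -> (z^T *m P *m z) 0 0 = 0 -> z = 0.
Proof.
case=> _ HP Pz0; apply/eqP; apply: contraTT isT => nz.
by have := HP z nz; rewrite Pz0 ltxx.
Qed.

Lemma posdef_unitmx n (P : 'M[R]_n) : posdef P -> P \in unitmx.
Proof.
case=> _ HP; rewrite unitmxE unitfE; apply/negP => /det0P [v v0 vP].
have := HP v^T; rewrite trmx_eq0 v0 => /(_ isT).
by rewrite trmxK vP mul0mx mxE ltxx.
Qed.

Lemma posdef_invmx n (P : 'M[R]_n) : posdef P -> posdef (invmx P).
Proof.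
move=> hP; have PU := posdef_unitmx hP; case: hP => PT HP; split.
  by rewrite trmx_inv PT.
move=> z nz; set w := invmx P *m z.
have zE : z = P *m w by rewrite /w mulmxA mulmxV // mul1mx.
have wnz : w != 0 by apply: contraNneq nz => w0; rewrite zE w0 mulmx0.
clearbody w; subst z.
by rewrite trmx_mul PT !mulmxA mulmxK //; apply: HP.
Qed.

Lemma normsq_sum n (z : 'cV[R]_n) : (z^T *m z) 0 0 = \sum_i z i 0 ^+ 2.
Proof. by rewrite mxE; apply: eq_bigr => i _; rewrite mxE expr2. Qed.

Lemma normsq_ge0 n (z : 'cV[R]_n) : 0 <= (z^T *m z) 0 0.
Proof. by rewrite normsq_sum sumr_ge0 // => i _; apply: sqr_ge0. Qed.

Lemma normsq_eq0 n (z : 'cV[R]_n) : (z^T *m z) 0 0 = 0 -> z = 0.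
Proof.
rewrite normsq_sum => z0; apply/matrixP => i j; rewrite ord1 mxE.
have sq0 := psumr_eq0P (fun k _ => sqr_ge0 (z k 0)) z0.
by apply/eqP; rewrite -sqrf_eq0 sq0.
Qed.

End Definiteness.

Section MatrixAlgebra.
Variable R : realType.

Lemma trmxD m n (A B : 'M[R]_(m, n)) : (A + B)^T = A^T + B^T.
Proof. exact: linearD. Qed.

Lemma trmxN m n (A : 'M[R]_(m, n)) : (- A)^T = - A^T.
Proof. exact: linearN. Qed.

Lemma addmxE m n (A B : 'M[R]_(m, n)) i j : (A + B) i j = A i j + B i j.
Proof. by rewrite mxE. Qed.

Lemma oppmxE m n (A : 'M[R]_(m, n)) i j : (- A) i j = - A i j.
Proof. by rewrite mxE. Qed.

Lemma quadformB n (X Y : 'M[R]_n) (x : 'cV[R]_n) :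
  (x^T *m (X - Y) *m x) 0 0 = (x^T *m X *m x) 0 0 - (x^T *m Y *m x) 0 0.
Proof. by rewrite mulmxBr mulmxBl addmxE oppmxE. Qed.

Lemma quadformN n (X : 'M[R]_n) (x : 'cV[R]_n) :
  (x^T *m (- X) *m x) 0 0 = - (x^T *m X *m x) 0 0.
Proof. by rewrite mulmxN mulNmx oppmxE. Qed.

Lemma quadform_congr m n (Y : 'M[R]_(m, n)) (X : 'M[R]_m) (x : 'cV[R]_n) :
  (x^T *m (Y^T *m X *m Y) *m x) 0 0 = ((Y *m x)^T *m X *m (Y *m x)) 0 0.
Proof. by rewrite trmx_mul !mulmxA. Qed.

Lemma normsq_congr m n (Y : 'M[R]_(m, n)) (x : 'cV[R]_n) :
  (x^T *m (Y^T *m Y) *m x) 0 0 = ((Y *m x)^T *m (Y *m x)) 0 0.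
Proof. by rewrite trmx_mul !mulmxA. Qed.

Lemma symblock2_tr p q (P : 'M[R]_p) (C : 'M[R]_(p, q)) S :
  P^T = P -> S^T = S -> (symblock2 P C S)^T = symblock2 P C S.
Proof. by move=> PT ST; rewrite /symblock2 tr_block_mx trmxK PT ST. Qed.

Lemma Lcal_tr m n (L : 'M[R]_(m, n)) D Lb Db :
  D^T = D -> Db^T = Db -> (Lcal L D Lb Db)^T = Lcal L D Lb Db.
Proof.
move=> DT DbT; rewrite /Lcal trmxD !trmxN trmxD !trmx_mul !trmxK trmx_inv DT DbT.
by rewrite !mulmxA; congr (_ - _); rewrite addrC.
Qed.

Lemma LMI_tr nx nu (Qt : 'M[R]_nx) (Rt : 'M[R]_nu) A B K Th Ab Bb Kb Thb :
  Qt^T = Qt -> Rt^T = Rt -> Th^T = Th -> Thb^T = Thb ->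
  (LMI Qt Rt A B K Th Ab Bb Kb Thb)^T = LMI Qt Rt A B K Th Ab Bb Kb Thb.
Proof.
move=> QT RT ThT ThbT; rewrite /LMI.
rewrite !symblock2_tr ?trmx1 ?trmx_inv ?QT ?RT //.
  by rewrite trmxD !Lcal_tr ?trmx1.
by rewrite trmxD ThbT Lcal_tr ?trmx1.
Qed.

Lemma Dmat_tr nx nu (Qt : 'M[R]_nx) (Rt : 'M[R]_nu) A B K Th :
  Qt^T = Qt -> Rt^T = Rt -> Th^T = Th ->
  (Dmat Qt Rt A B K Th)^T = Dmat Qt Rt A B K Th.
Proof.
move=> QT RT ThT; rewrite /Dmat !trmxD trmxN !trmx_mul !trmxK QT RT ThT.
by rewrite !mulmxA !trmxD !trmx_mul !trmxK.
Qed.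

End MatrixAlgebra.

Section LMIIdentities.
Variables (R : realType) (nx nu : nat).
Variables (Qt : 'M[R]_nx) (Rt : 'M[R]_nu).
Variables (A : 'M[R]_nx) (B : 'M[R]_(nx, nu)) (K : 'M[R]_(nu, nx)).
Variable Th : 'M[R]_nx.
Hypotheses (QT : Qt^T = Qt) (RT : Rt^T = Rt) (ThT : Th^T = Th).
Hypotheses (QU : Qt \in unitmx) (RU : Rt \in unitmx).

Lemma LMI_nominal_quad (u1 : 'cV[R]_nu) (u2 : 'cV[R]_nx) (u3 : 'cV[R]_nu)
    (y x : 'cV[R]_nx) :
  Th \in unitmx ->
  let v := col_mx (col_mx (col_mx (col_mx u1 u2) u3) y) x in
  (v^T *m LMI Qt Rt A B K Th A B K Th *m v) 0 0 =
  ((u1 - B^T *m y + K *m x)^T *m (u1 - B^T *m y + K *m x)) 0 0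
  + ((u2 + Qt *m x)^T *m invmx Qt *m (u2 + Qt *m x)) 0 0
  + ((u3 + Rt *m K *m x)^T *m invmx Rt *m (u3 + Rt *m K *m x)) 0 0
  + ((y + Th *m (A + B *m K) *m x)^T *m invmx Th
       *m (y + Th *m (A + B *m K) *m x)) 0 0
  - (x^T *m Dmat Qt Rt A B K Th *m x) 0 0.
Proof.
move=> ThU v; rewrite /v /LMI /symblock2 /Lcal /Dmat.
rewrite !(tr_col_mx, mul_row_block, mul_row_col, mul_mx_row, add_row_mx).
rewrite !(mulmxDl, mulmxDr, mulmxN, mulNmx, mulmx0, mul0mx, mulmx1, mul1mx,
  trmxD, trmxN, trmx_mul, trmxK, trmx1, trmx0, invmx1, mulmxA, addr0, add0r,
  trmx_inv, QT, RT, ThT, oppr0).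
rewrite !(mulmxK QU, mulmxK RU, mulmxK ThU, mulmxKV QU, mulmxKV RU, mulmxKV ThU).
rewrite !(addmxE, oppmxE).
ring.
Qed.

(* [Ac] stands for the closed-loop matrix [Ab + Bb Kb] of the LMI unknowns. *)
Lemma LMI_congruence (Ac : 'M[R]_nx) (Bb : 'M[R]_(nx, nu)) (Kb : 'M[R]_(nu, nx))
    (Thb : 'M[R]_nx) :
  Thb^T = Thb ->
  let Y := - (Thb *m Ac) in
  let L : 'M[R]_(nu + nx + nu + nx + nx, nx) :=
    col_mx (col_mx (col_mx (col_mx (Bb^T *m Y - Kb) (- Qt)) (- (Rt *m Kb))) Y)
      1%:M in
  let G := (Bb - B)^T *m Thb *m Ac in
  let W := Ac - invmx Th *m Thb *m Ac in
  L^T *m LMI Qt Rt A B K Th (Ac - Bb *m Kb) Bb Kb Thb *m L =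
  - Dmat Qt Rt (Ac - Bb *m Kb) Bb Kb Thb
  - (Kb - K)^T *m (Kb - K) - G^T *m G - W^T *m Thb *m W.
Proof.
move=> ThbT Y L G W; rewrite /L /G /W /Y /LMI /symblock2 /Lcal /Dmat subrK.
rewrite !(tr_col_mx, mul_row_block, mul_row_col, mul_mx_row, add_row_mx).
rewrite !(mulmxDl, mulmxDr, mulmxN, mulNmx, mulmx0, mul0mx, mulmx1, mul1mx,
  trmxD, trmxN, trmx_mul, trmxK, trmx1, trmx0, invmx1, mulmxA, addr0, add0r,
  trmx_inv, QT, RT, ThT, ThbT, oppr0).
rewrite !(mulmxK QU, mulmxK RU, mulmxKV QU, mulmxKV RU).
apply/matrixP => i j; rewrite !(addmxE, oppmxE).
ring.
Qed.

End LMIIdentities.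

Section LMIDefiniteness.
Variables (R : realType) (nx nu : nat).
Variables (Qt : 'M[R]_nx) (Rt : 'M[R]_nu).
Variables (A : 'M[R]_nx) (B : 'M[R]_(nx, nu)) (K : 'M[R]_(nu, nx)).
Variable Th : 'M[R]_nx.
Hypotheses (hQ : posdef Qt) (hR : posdef Rt) (hTh : posdef Th).

Lemma LMI_nominal_posdef :
  negdef (Dmat Qt Rt A B K Th) -> posdef (LMI Qt Rt A B K Th A B K Th).
Proof.
case=> _ HD; split; first exact: LMI_tr hQ.1 hR.1 hTh.1 hTh.1.
move=> v nz.
have [u1 [u2 [u3 [y [x vE]]]]] : exists u1 u2 u3 y x,
    v = col_mx (col_mx (col_mx (col_mx u1 u2) u3) y) x.
  exists (usubmx (usubmx (usubmx (usubmx v)))),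
    (dsubmx (usubmx (usubmx (usubmx v)))), (dsubmx (usubmx (usubmx v))),
    (dsubmx (usubmx v)), (dsubmx v).
  by rewrite !vsubmxK.
subst v; rewrite LMI_nominal_quad ?posdef_unitmx ?hQ.1 ?hR.1 ?hTh.1 //.
set w1 := u1 - _ + _; set w2 := u2 + _; set w3 := u3 + _; set w4 := y + _.
have g1 := normsq_ge0 w1; have g2 := posdef_quad_ge0 w2 (posdef_invmx hQ).
have g3 := posdef_quad_ge0 w3 (posdef_invmx hR).
have g4 := posdef_quad_ge0 w4 (posdef_invmx hTh).
have [x0|xnz] := eqVneq x 0; last by have := HD x xnz; lra.
have zero_entry : (0 : 'M[R]_1) 0 0 = 0 by rewrite mxE.
rewrite x0 mulmx0 zero_entry subr0 ltNge; apply/negP => w_le0.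
have y0 : w4 = 0 by apply: posdef_quad_eq0 (posdef_invmx hTh) _; lra.
have u30 : w3 = 0 by apply: posdef_quad_eq0 (posdef_invmx hR) _; lra.
have u20 : w2 = 0 by apply: posdef_quad_eq0 (posdef_invmx hQ) _; lra.
have u10 : w1 = 0 by apply: normsq_eq0; lra.
move: y0 u30 u20 u10; rewrite /w1 /w2 /w3 /w4 x0 !mulmx0 !addr0 => y0 u30 u20.
rewrite y0 mulmx0 subr0 => u10.
by move: nz; rewrite u10 u20 u30 y0 x0 !col_mx0 eqxx.
Qed.

Lemma LMI_Dmat_negdef (Ab : 'M[R]_nx) (Bb : 'M[R]_(nx, nu))
    (Kb : 'M[R]_(nu, nx)) (Thb : 'M[R]_nx) :
  posdef Thb -> posdef (LMI Qt Rt A B K Th Ab Bb Kb Thb) ->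
  negdef (Dmat Qt Rt Ab Bb Kb Thb).
Proof.
move=> hThb [_ HM]; split; first exact: Dmat_tr hQ.1 hR.1 hThb.1.
move=> x xnz; set Ac := Ab + Bb *m Kb.
have AbE : Ab = Ac - Bb *m Kb by rewrite /Ac addrK.
clearbody Ac; subst Ab.
pose Y := - (Thb *m Ac).
pose L : 'M[R]_(nu + nx + nu + nx + nx, nx) :=
  col_mx (col_mx (col_mx (col_mx (Bb^T *m Y - Kb) (- Qt)) (- (Rt *m Kb))) Y) 1%:M.
have Lxnz : L *m x != 0 by rewrite mul_col_mx mul1mx col_mx_eq0 negb_and xnz orbT.
have := HM _ Lxnz; rewrite -quadform_congr LMI_congruence ?hQ.1 ?hR.1 ?hTh.1
  ?hThb.1 ?posdef_unitmx //.
rewrite !quadformB quadformN !normsq_congr quadform_congr.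
have gK := normsq_ge0 ((Kb - K) *m x).
have gB := normsq_ge0 ((Bb - B)^T *m Thb *m Ac *m x).
have gTh := posdef_quad_ge0 ((Ac - invmx Th *m Thb *m Ac) *m x) hThb.
lra.
Qed.

End LMIDefiniteness.

Theorem theorem3 (R : realType) (nx nu : nat)
    (Qt : 'M[R]_nx) (Rt : 'M[R]_nu)
    (A : 'M[R]_nx) (B : 'M[R]_(nx, nu)) (K : 'M[R]_(nu, nx)) (Th : 'M[R]_nx) :
  posdef Qt -> posdef Rt -> posdef Th ->
  negdef (Dmat Qt Rt A B K Th) ->
  posdef (LMI Qt Rt A B K Th A B K Th) /\
  (forall (Ab : 'M[R]_nx) (Bb : 'M[R]_(nx, nu)) (Kb : 'M[R]_(nu, nx))
          (Thb : 'M[R]_nx),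
     posdef Thb ->
     posdef (LMI Qt Rt A B K Th Ab Bb Kb Thb) ->
     negdef (Dmat Qt Rt Ab Bb Kb Thb)).
Proof.
move=> hQ hR hTh hD; split; first exact: LMI_nominal_posdef.
by move=> Ab Bb Kb Thb; apply: LMI_Dmat_negdef.
Qed.
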